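(* Let $K$ be the localization $R[\varphi^{-1}]$ of a $(\varphi)$-adic ring $R$ over $A$ and let $z\in K$ be a global coordinate for $K$. Then $z\otimes1-1\otimes z$ is invertible in both completions $\widehat{K\otimes K}^1$ and $\widehat{K\otimes K}^2$.
   Context: $A$ is a noetherian commutative $\mathbb C$-algebra with the discrete topology; tensor products are over $A$. A $(\varphi)$-adic ring is a commutative $A$-algebra $R$ with a non-invertible non-zero-divisor $\varphi$ such that $R$ is complete and separated in the $\varphi$-adic topology and $R/\varphi R$ is finite free over $A$; $K=R[\varphi^{-1}]$ has the topology in which the $\varphi^NR$ ($N\in\mathbb Z$) form a fundamental system of neighbourhoods of $0$. $\widehat{K\otimes K}$ is the completion of $K\otimes K$ w.r.t. $\varphi^NR\otimes\varphi^MR$; $\widehat{K\otimes K}^1$ and $\widehat{K\otimes K}^2$ are the completions w.r.t. $\varphi^NR\otimes K$ and $K\otimes\varphi^NR$ respectively (these are rings). $z\in K$ is a global coordinate if $\Omega^{1,\mathrm{cont}}_{K/A}$ is finitely generated projective and the kernel of the multiplication map $\widehat{K\otimes K}\to K$ is the ideal generated by $z\otimes1-1\otimes z$. *)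

From mathcomp Require Import all_boot all_algebra.
From mathcomp Require Import reals Rstruct complex.
From Stdlib Require Import Reals.
From Stdlib Require List.

Set Implicit Arguments.
Unset Strict Implicit.
Unset Printing Implicit Defensive.

Import GRing.Theory.
Local Open Scope ring_scope.

Definition CC : numClosedFieldType := Rdefinitions.R[i].

Definition is_ideal (A : comNzRingType) (Id : A -> Prop) : Prop :=
  Id 0 /\ (forall x y, Id x -> Id y -> Id (x + y)) /\ (forall a x, Id x -> Id (a * x)).

Definition noetherian (A : comNzRingType) : Prop :=
  forall Id : A -> Prop, is_ideal Id ->
  exists s : seq A, forall x,
    Id x <-> exists c : ('I_(size s) -> A), x = \sum_(i < size s) c i * s`_i.

Definition phidvd (A : comNzRingType) (R : comAlgType A) (phi : R) (n : nat) (x : R) :=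
  exists y : R, x = phi ^+ n * y.

Definition phi_adic_ring (A : comNzRingType) (R : comAlgType A) (phi : R) : Prop :=
  ~ (exists u : R, phi * u = 1)
  /\ (forall x : R, phi * x = 0 -> x = 0)
  /\ (forall x : R, (forall n, phidvd phi n x) -> x = 0)
  /\ (forall u : nat -> R,
        (forall N : nat, exists M : nat, forall m n : nat, (leq M m) -> (leq M n) -> phidvd phi N (u m - u n)) ->
        exists l : R, forall N : nat, exists M : nat, forall n : nat, (leq M n) -> phidvd phi N (u n - l))
  (* R / phi R is finite free over A: the classes of b_0, ..., b_(d-1) form an A-basis *)
  /\ (exists (d : nat) (b : 'I_d -> R),
        (forall r : R, exists a : ('I_d -> A), phidvd phi 1 (r - \sum_(i < d) a i *: b i))
        /\ (forall a : 'I_d -> A, phidvd phi 1 (\sum_(i < d) a i *: b i) -> forall i, a i = 0)).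

Definition is_alg_morph (A : comNzRingType) (X Y : lalgType A) (f : X -> Y) : Prop :=
  (forall x y, f (x + y) = f x + f y) /\ (forall x y, f (x * y) = f x * f y)
  /\ f 1 = 1 /\ (forall (a : A) x, f (a *: x) = a *: f x).

(* K together with iota : R -> K is the localization R[phi^-1]
   (phi being a non-zero-divisor, iota is injective). *)
Definition is_localization (A : comNzRingType) (R : comAlgType A) (K : comUnitAlgType A)
    (iota : R -> K) (phi : R) : Prop :=
  is_alg_morph iota /\ injective iota /\ iota phi \is a GRing.unit
  /\ (forall k : K, exists (r : R) (n : nat), k = iota r / iota phi ^+ n).

Definition inPhiR (A : comNzRingType) (R : comAlgType A) (K : comUnitAlgType A)
    (iota : R -> K) (phi : R) (N : int) (x : K) : Prop :=
  exists r : R, x = iota phi ^ N * iota r.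

(* T with i1 i2 : K -> T is the tensor product K (x)_A K
   (i1 k = k (x) 1, i2 k = 1 (x) k, and i1 a * i2 b = a (x) b). *)
Definition is_bilinear (A : comNzRingType) (K : lmodType A) (M : lmodType A)
    (f : K -> K -> M) : Prop :=
  (forall (c : A) x y w, f (c *: x + y) w = c *: f x w + f y w)
  /\ (forall (c : A) w x y, f w (c *: x + y) = c *: f w x + f w y).

Definition is_linear (A : comNzRingType) (U V : lmodType A) (g : U -> V) : Prop :=
  forall (c : A) x y, g (c *: x + y) = c *: g x + g y.

Definition is_tensor_product (A : comNzRingType) (K : comUnitAlgType A) (T : comAlgType A)
    (i1 i2 : K -> T) : Prop :=
  is_alg_morph i1 /\ is_alg_morph i2
  /\ forall (M : lmodType A) (f : K -> K -> M), is_bilinear f ->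
       exists g : T -> M, is_linear g /\ (forall a b, g (i1 a * i2 b) = f a b)
         /\ forall g' : T -> M, is_linear g' -> (forall a b, g' (i1 a * i2 b) = f a b) ->
              forall t, g' t = g t.

Definition tspan (A : comNzRingType) (K : comUnitAlgType A) (T : comAlgType A)
    (i1 i2 : K -> T) (P : K -> K -> Prop) (t : T) : Prop :=
  exists s : seq (K * K), (forall p, p \in s -> P p.1 p.2)
    /\ t = \sum_(p <- s) i1 p.1 * i2 p.2.

Section Nbhds.
Variables (A : comNzRingType) (R : comAlgType A) (phi : R) (K : comUnitAlgType A)
  (iota : R -> K) (T : comAlgType A) (i1 i2 : K -> T).

(* phi^N R (x) K, K (x) phi^N R, phi^N R (x) phi^M R as submodules of K (x) K *)
Definition U1 (N : int) : T -> Prop := tspan i1 i2 (fun a _ => inPhiR iota phi N a).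
Definition U2 (N : int) : T -> Prop := tspan i1 i2 (fun _ b => inPhiR iota phi N b).
Definition U12 (NM : int * int) : T -> Prop :=
  tspan i1 i2 (fun a b => inPhiR iota phi NM.1 a /\ inPhiR iota phi NM.2 b).
End Nbhds.

(* Completions, via Cauchy sequences: for a fundamental system of
   neighbourhoods of 0 (U i)_i, a sequence is Cauchy, resp. tends to 0. *)
Definition cauchy (I : Type) (G : zmodType) (U : I -> G -> Prop) (y : nat -> G) : Prop :=
  forall i, exists n0 : nat, forall m n : nat, (leq n0 m) -> (leq n0 n) -> U i (y m - y n).

Definition tendsto0 (I : Type) (G : zmodType) (U : I -> G -> Prop) (y : nat -> G) : Prop :=
  forall i, exists n0 : nat, forall n : nat, (leq n0 n) -> U i (y n).

(* x (an element of the ring T) is invertible in the separated completion of T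
   w.r.t. U: there is y in the completion (a Cauchy sequence) with x * y = 1. *)
Definition invertible_in_completion (I : Type) (T : ringType) (U : I -> T -> Prop)
    (x : T) : Prop :=
  exists y : nat -> T, cauchy U y /\ tendsto0 U (fun n => x * y n - 1).

Section GlobalCoordinate.
Variables (A : comNzRingType) (R : comAlgType A) (phi : R) (K : comUnitAlgType A)
  (iota : R -> K) (T : comAlgType A) (i1 i2 : K -> T).

Let W := U12 phi iota i1 i2.
Let V := inPhiR iota phi.

(* For the (continuous) multiplication map mu : K (x) K -> K and its extension
   to the completion \hat{K (x) K} (elements = W-Cauchy sequences):
   J = kernel of \hat mu, J^2, the K-module J/J^2 = Omega^{1,cont}_{K/A}. *)
Definition inJ (mu : T -> K) (y : nat -> T) : Prop :=
  cauchy W y /\ tendsto0 V (fun n => mu (y n)).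

Definition inJ2 (mu : T -> K) (y : nat -> T) : Prop :=
  cauchy W y /\
  exists s : seq ((nat -> T) * (nat -> T)),
    (forall p, List.In p s -> inJ mu p.1 /\ inJ mu p.2)
    /\ tendsto0 W (fun n => y n - \sum_(p <- s) p.1 n * p.2 n).

Definition eqJJ2 (mu : T -> K) (y y' : nat -> T) : Prop :=
  inJ2 mu (fun n => y n - y' n).

(* Omega^{1,cont}_{K/A} = J/J^2 is a finitely generated projective K-module:
   it is a direct summand (retract) of some K^n, via K-linear maps
   s : J/J^2 -> K^n and p : K^n -> J/J^2 with p o s = id. *)
Definition Omega_fg_projective (mu : T -> K) : Prop :=
  exists (n : nat) (s : (nat -> T) -> 'I_n -> K) (p : ('I_n -> K) -> nat -> T),
    (forall v, inJ mu (p v))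
    /\ (forall (k : K) v w,
          eqJJ2 mu (p (fun i => k * v i + w i)) (fun m => i1 k * p v m + p w m))
    /\ (forall y y', inJ mu y -> inJ mu y' -> eqJJ2 mu y y' -> s y = s y')
    /\ (forall (k : K) y y', inJ mu y -> inJ mu y' ->
          s (fun m => i1 k * y m + y' m) = (fun i => k * s y i + s y' i))
    /\ (forall y, inJ mu y -> eqJJ2 mu (p (s y)) y).

Definition global_coordinate (z : K) : Prop :=
  forall mu : T -> K, is_linear mu -> (forall a b, mu (i1 a * i2 b) = a * b) ->
    Omega_fg_projective mu
    /\ (forall y, cauchy W y ->
          (tendsto0 V (fun n => mu (y n)) <->
           exists w, cauchy W w /\ tendsto0 W (fun n => y n - (i1 z - i2 z) * w n))).
End GlobalCoordinate.

From HB Require Import structures.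
From mathcomp Require Import all_boot all_algebra.
From mathcomp Require Import boolp.
From mathcomp Require Import zify ring.
From mathcomp Require Import reals Rstruct complex.
Import GRing.Theory.
Local Open Scope ring_scope.

Set Implicit Arguments.
Unset Strict Implicit.
Unset Printing Implicit Defensive.

(* Put f = iota phi and a = f (x) 1 - 1 (x) f.  Since mu(a) = 0,
   the global coordinate property gives a W-Cauchy sequence w with
   (z (x) 1 - 1 (x) z) * w_n -> a, where W is the topology of hat(K (x) K).
   It therefore suffices to see that a is invertible in both one-sided
   completions, since those topologies are coarser than W.  In the first one,
   a * (-(1 (x) f^-1)) = 1 - q with q = f (x) f^-1 in phi R (x) K, and 1 - q is
   inverted by the geometric series sum_k q^k. *)

Record filtration (T : comNzRingType) (S : int -> T -> Prop) : Prop := Filtration {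
  filt0 : forall N, S N 0;
  filtB : forall N u v, S N u -> S N v -> S N (u - v);
  filt_mono : forall M N u, M <= N -> S N u -> S M u;
  filt_mul : forall N M u v, S N u -> S M v -> S (N + M) (u * v);
  filt1 : S 0 1;
  filt_exhaustive : forall t, exists N, S N t
}.

Section Filtration.
Variables (T : comNzRingType) (S : int -> T -> Prop).
Hypothesis hS : filtration S.

Lemma filtN N u : S N u -> S N (- u).
Proof. by move=> Su; rewrite -sub0r; apply: (filtB hS) => //; apply: (filt0 hS). Qed.

Lemma filtD N u v : S N u -> S N v -> S N (u + v).
Proof. by move=> Su Sv; rewrite -[v]opprK; apply: (filtB hS) => //; apply: filtN. Qed.

Lemma filt_sum N (I : eqType) (r : seq I) (P : pred I) (F : I -> T) :
  (forall i, i \in r -> P i -> S N (F i)) -> S N (\sum_(i <- r | P i) F i).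
Proof.
move=> SF; rewrite big_seq_cond; apply: big_ind => [|u v|i /andP [ir Pi]].
- exact: (filt0 hS).
- exact: filtD.
- exact: SF.
Qed.

Lemma filt_mul_le P N M u v : P <= N + M -> S N u -> S M v -> S P (u * v).
Proof. by move=> le Su Sv; apply: (filt_mono hS) le _; apply: (filt_mul hS). Qed.

Lemma filtX N u k : S N u -> S (N * k%:Z) (u ^+ k).
Proof.
move=> Su; elim: k => [|k IH]; first by rewrite expr0 mulr0; apply: (filt1 hS).
by rewrite exprS; apply: filt_mul_le Su IH; lia.
Qed.

Lemma cauchy_bounded u : cauchy S u ->
  exists (b : int) (n0 : nat), forall m, (n0 <= m)%N -> S b (u m).
Proof.
move=> uC; have [n0 Hn0] := uC 0; have [b Sb] := filt_exhaustive hS (u n0).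
exists (Num.min b 0), n0 => m le_m; rewrite -(subrK (u n0) (u m)).
apply: filtD; first by apply: (filt_mono hS) (Hn0 m n0 le_m (leqnn n0)); lia.
by apply: (filt_mono hS) Sb; lia.
Qed.

Lemma cauchy_const c : cauchy S (fun _ => c).
Proof. by move=> N; exists 0%N => m n _ _; rewrite subrr; apply: (filt0 hS). Qed.

Lemma cauchyM u v : cauchy S u -> cauchy S v -> cauchy S (fun n => u n * v n).
Proof.
move=> uC vC N; have [bu [nu Hu]] := cauchy_bounded uC.
have [bv [nv Hv]] := cauchy_bounded vC.
have [n1 Hn1] := uC (N - bv); have [n2 Hn2] := vC (N - bu).
exists (maxn (maxn nu nv) (maxn n1 n2)) => m n le_m le_n.
have -> : u m * v m - u n * v n = (u m - u n) * v m + u n * (v m - v n) by ring.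
apply: filtD.
- by apply: filt_mul_le (Hn1 m n _ _) (Hv m _) => //; lia.
- by apply: filt_mul_le (Hu n _) (Hn2 m n _ _) => //; lia.
Qed.

Lemma tendsto0B u v : tendsto0 S u -> tendsto0 S v -> tendsto0 S (fun n => u n - v n).
Proof.
move=> uT vT N; have [n1 Hn1] := uT N; have [n2 Hn2] := vT N.
by exists (maxn n1 n2) => n le_n; apply: (filtB hS); [apply: Hn1 | apply: Hn2]; lia.
Qed.

Lemma tendsto0M u v : tendsto0 S u -> cauchy S v -> tendsto0 S (fun n => u n * v n).
Proof.
move=> uT vC N; have [bv [nv Hv]] := cauchy_bounded vC; have [n1 Hn1] := uT (N - bv).
by exists (maxn n1 nv) => n le_n; apply: filt_mul_le (Hn1 n _) (Hv n _) => //; lia.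
Qed.

(* Partial geometric sums s_n = sum_(k < n) q^k; for q in S_1 they are
   Cauchy, since s_n - s_k lies in S_k for k <= n. *)
Lemma geometric_tail q k n : S 1 q -> (k <= n)%N ->
  S k%:Z (\sum_(0 <= i < n) q ^+ i - \sum_(0 <= i < k) q ^+ i).
Proof.
move=> Sq le_kn; rewrite (big_cat_nat (leq0n k) le_kn) /= addrAC subrr add0r.
apply: filt_sum => i; rewrite mem_index_iota => /andP [le_ki _] _.
by apply: (filt_mono hS) (filtX i Sq); lia.
Qed.

Lemma geometric_invertible q : S 1 q -> invertible_in_completion S (1 - q).
Proof.
move=> Sq; pose s n := \sum_(0 <= i < n) q ^+ i; exists s; split.
- move=> N; exists `|N|%N => m n le_m le_n.
  have -> : s m - s n = (s m - s `|N|%N) - (s n - s `|N|%N) by rewrite opprB addrA subrK.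
  by apply: (filtB hS); apply: (filt_mono hS) (geometric_tail Sq _) => //; lia.
- move=> N; exists `|N|%N => n le_n.
  have -> : (1 - q) * s n - 1 = - q ^+ n.
    by rewrite /s big_mkord -[1 - q]opprB mulNr -subrX1 opprB addrAC subrr sub0r.
  by apply: filtN; apply: (filt_mono hS) (filtX n Sq); lia.
Qed.

Lemma invertible_of_factor a b c M :
  a * c = b -> S M c -> invertible_in_completion S b -> invertible_in_completion S a.
Proof.
move=> abc Sc [g [gC gT]]; exists (fun n => c * g n); split.
  by apply: cauchyM gC; apply: cauchy_const.
by under eq_fun => n do rewrite mulrA abc.
Qed.

Lemma invertibleN a :
  invertible_in_completion S a -> invertible_in_completion S (- a).
Proof.
apply: (invertible_of_factor (c := -1) (M := 0)); first by rewrite mulrN1 opprK.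
by apply: filtN; apply: (filt1 hS).
Qed.

Lemma invertible_of_approx x a w :
  cauchy S w -> tendsto0 S (fun n => a - x * w n) ->
  invertible_in_completion S a -> invertible_in_completion S x.
Proof.
move=> wC awT [g [gC gT]]; exists (fun n => w n * g n); split.
  exact: cauchyM.
have -> : (fun n => x * (w n * g n) - 1) = (fun n => (a * g n - 1) - (a - x * w n) * g n).
  by apply: funext => n; ring.
exact: tendsto0B gT (tendsto0M awT gC).
Qed.

End Filtration.

Lemma cauchy_coarser (I J : Type) (G : zmodType) (U : I -> G -> Prop)
    (U' : J -> G -> Prop) y :
  (forall j, exists i, forall t, U i t -> U' j t) -> cauchy U y -> cauchy U' y.
Proof.
move=> UU' yC j; have [i Hi] := UU' j; have [n0 Hn0] := yC i.
by exists n0 => m n le_m le_n; apply: Hi; apply: Hn0.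
Qed.

Lemma tendsto0_coarser (I J : Type) (G : zmodType) (U : I -> G -> Prop)
    (U' : J -> G -> Prop) y :
  (forall j, exists i, forall t, U i t -> U' j t) -> tendsto0 U y -> tendsto0 U' y.
Proof.
move=> UU' yT j; have [i Hi] := UU' j; have [n0 Hn0] := yT i.
by exists n0 => n le_n; apply: Hi; apply: Hn0.
Qed.

Section AlgMorph.
Variables (A : comNzRingType) (X Y : lalgType A) (g : X -> Y).
Hypothesis hg : is_alg_morph g.

Lemma alg_morphD x y : g (x + y) = g x + g y. Proof. by case: hg. Qed.
Lemma alg_morphM x y : g (x * y) = g x * g y. Proof. by case: hg => _ []. Qed.
Lemma alg_morph1 : g 1 = 1. Proof. by case: hg => _ [_ []]. Qed.
Lemma alg_morphZ (c : A) x : g (c *: x) = c *: g x. Proof. by case: hg => _ [_ [_]]. Qed.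

Lemma alg_morph0 : g 0 = 0.
Proof. by apply: (@addrI _ (g 0)); rewrite addr0 -alg_morphD addr0. Qed.

Lemma alg_morphN x : g (- x) = - g x.
Proof. by apply/eqP; rewrite -subr_eq0 opprK -alg_morphD addNr alg_morph0. Qed.

Lemma alg_morphX x k : g (x ^+ k) = g x ^+ k.
Proof. by elim: k => [|k IH]; rewrite ?expr0 ?alg_morph1 // !exprS alg_morphM IH. Qed.
End AlgMorph.

(* In a tensor product every element is a finite sum of pure tensors: the
   submodule spanned by pure tensors receives a bilinear map from K x K, and
   uniqueness in the universal property forces it to be everything. *)
Section PureTensors.
Variables (A : comNzRingType) (K : comUnitAlgType A) (T : comAlgType A) (i1 i2 : K -> T).

Definition pure_span : {pred T} := fun t =>
  `[< exists s : seq ((A * K) * K), t = \sum_(p <- s) p.1.1 *: (i1 p.1.2 * i2 p.2) >].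

Lemma pure_span_closed : subsemimod_closed pure_span.
Proof.
split; [split|].
- by apply/asboolP; exists [::]; rewrite big_nil.
- move=> u v /asboolP [s ->] /asboolP [s' ->]; apply/asboolP.
  by exists (s ++ s'); rewrite big_cat.
- move=> c u /asboolP [s ->]; apply/asboolP.
  exists [seq ((c * p.1.1, p.1.2), p.2) | p <- s].
  by rewrite big_map scaler_sumr; apply: eq_bigr => p _ /=; rewrite scalerA.
Qed.

HB.instance Definition _ := GRing.isSubSemiModClosed.Build A T pure_span pure_span_closed.
Definition pure_spanT := {t : T | pure_span t}.
HB.instance Definition _ := [isSub of pure_spanT for @proj1_sig T pure_span].
HB.instance Definition _ := [Choice of pure_spanT by <:].
HB.instance Definition _ := [SubChoice_isSubLmodule of pure_spanT by <:].

Hypothesis tp : is_tensor_product i1 i2.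

Lemma pure_tensor_bilinear : is_bilinear (fun a b => i1 a * i2 b).
Proof.
case: tp => h1 [h2 _]; split=> c x y w.
- by rewrite (alg_morphD h1) (alg_morphZ h1) mulrDl -scalerAl.
- by rewrite (alg_morphD h2) (alg_morphZ h2) mulrDr -scalerAr.
Qed.

Lemma tensor_spanned t : tspan i1 i2 (fun _ _ => True) t.
Proof.
have [h1 [_ UP]] := tp.
have pure_in a b : pure_span (i1 a * i2 b).
  by apply/asboolP; exists [:: ((1, a), b)]; rewrite big_seq1 scale1r.
pose F a b : pure_spanT := Sub (i1 a * i2 b) (pure_in a b).
have F_bilin : is_bilinear F.
  by have [l r] := pure_tensor_bilinear; split=> c x y w; apply: val_inj; rewrite /= ?l ?r.
have [g [g_lin [gF _]]] := UP _ F F_bilin.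
have [g0 [_ [_ g_uniq]]] := UP _ _ pure_tensor_bilinear.
have val_g : val (g t) = t.
  transitivity (g0 t); last by rewrite -(g_uniq id).
  apply: (g_uniq (fun t => val (g t))) => [c x y | a b].
  - by rewrite g_lin.
  - by rewrite gF SubK.
move: (valP (g t)) => /asboolP [s]; rewrite val_g => ->.
exists [seq (p.1.1 *: p.1.2, p.2) | p <- s]; split => //.
by rewrite big_map; apply: eq_bigr => p _ /=; rewrite (alg_morphZ h1) scalerAl.
Qed.

Lemma multiplication_map :
  exists mu : T -> K, is_linear mu /\ forall a b, mu (i1 a * i2 b) = a * b.
Proof.
have [_ [_ UP]] := tp.
have mul_bilin : is_bilinear (fun a b : K => a * b).
  by split=> c x y w; rewrite ?mulrDl ?mulrDr -?scalerAl -?scalerAr.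
by have [mu [mu_lin [muF _]]] := UP _ _ mul_bilin; exists mu.
Qed.
End PureTensors.

Lemma tspan_weaken (A : comNzRingType) (K : comUnitAlgType A) (T : comAlgType A)
    (i1 i2 : K -> T) (P Q : K -> K -> Prop) t :
  (forall a b, P a b -> Q a b) -> tspan i1 i2 P t -> tspan i1 i2 Q t.
Proof. by move=> PQ [s [Ps ->]]; exists s; split => // p /Ps /PQ. Qed.

Lemma tspan_flip (A : comNzRingType) (K : comUnitAlgType A) (T : comAlgType A)
    (i1 i2 : K -> T) (P : K -> K -> Prop) t :
  tspan i1 i2 P t -> tspan i2 i1 (fun a b => P b a) t.
Proof.
move=> [s [Ps ->]]; exists [seq (p.2, p.1) | p <- s]; split.
  by move=> p /mapP [q qs ->]; apply: Ps.
by rewrite big_map; apply: eq_bigr => p _; rewrite mulrC.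
Qed.

Lemma U2_flip (A : comNzRingType) (R : comAlgType A) (phi : R) (K : comUnitAlgType A)
    (iota : R -> K) (T : comAlgType A) (i1 i2 : K -> T) :
  U2 phi iota i1 i2 = U1 phi iota i2 i1.
Proof. by apply: funext => N; apply: funext => t; apply: propext; split; apply: tspan_flip. Qed.

Lemma U12_finer_U1 (A : comNzRingType) (R : comAlgType A) (phi : R)
    (K : comUnitAlgType A) (iota : R -> K) (T : comAlgType A) (i1 i2 : K -> T) N :
  exists NM, forall t, U12 phi iota i1 i2 NM t -> U1 phi iota i1 i2 N t.
Proof. by exists (N, 0) => t; apply: tspan_weaken => a b []. Qed.

Lemma U12_finer_U2 (A : comNzRingType) (R : comAlgType A) (phi : R)
    (K : comUnitAlgType A) (iota : R -> K) (T : comAlgType A) (i1 i2 : K -> T) N :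
  exists NM, forall t, U12 phi iota i1 i2 NM t -> U2 phi iota i1 i2 N t.
Proof. by exists (0, N) => t; apply: tspan_weaken => a b []. Qed.

Section PhiPowers.
Variables (A : comNzRingType) (R : comAlgType A) (phi : R) (K : comUnitAlgType A)
  (iota : R -> K).
Hypotheses (hi : is_alg_morph iota) (fu : iota phi \is a GRing.unit).
Local Notation V := (inPhiR iota phi).

Lemma inPhiR0 N : V N 0.
Proof. by exists 0; rewrite (alg_morph0 hi) mulr0. Qed.

Lemma inPhiRN N a : V N a -> V N (- a).
Proof. by move=> [r ->]; exists (- r); rewrite (alg_morphN hi) mulrN. Qed.

Lemma inPhiR1 : V 0 1.
Proof. by exists 1; rewrite (alg_morph1 hi) mulr1. Qed.

Lemma inPhiR_phi : V 1 (iota phi).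
Proof. by exists 1; rewrite (alg_morph1 hi) mulr1 expr1z. Qed.

Lemma inPhiRM N M a b : V N a -> V M b -> V (N + M) (a * b).
Proof. by move=> [r ->] [r' ->]; exists (r * r'); rewrite (alg_morphM hi) exprzDr // mulrACA. Qed.

Lemma inPhiR_mono M N a : M <= N -> V N a -> V M a.
Proof.
move=> le [r ->]; have [k ->] : exists k : nat, N = M + k%:Z by exists `|N - M|%N; lia.
by exists (phi ^+ k * r); rewrite exprzDr // (alg_morphM hi) (alg_morphX hi) mulrA.
Qed.

Hypothesis loc : forall k : K, exists (r : R) (n : nat), k = iota r / iota phi ^+ n.

Lemma inPhiR_exhaustive a : exists N, V N a.
Proof. by have [r [n ->]] := loc a; exists (- n%:Z), r; rewrite -exprnN mulrC. Qed.
End PhiPowers.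


Section FirstCompletion.
Variables (A : comNzRingType) (R : comAlgType A) (phi : R) (K : comUnitAlgType A)
  (iota : R -> K) (T : comAlgType A) (i1 i2 : K -> T).
Hypotheses (h1 : is_alg_morph i1) (h2 : is_alg_morph i2) (hi : is_alg_morph iota)
  (fu : iota phi \is a GRing.unit).
Local Notation f := (iota phi).
Local Notation S := (U1 phi iota i1 i2).

Lemma U1_pure N a b : inPhiR iota phi N a -> S N (i1 a * i2 b).
Proof. by move=> Va; exists [:: (a, b)]; rewrite big_seq1; split=> // p; rewrite inE => /eqP ->. Qed.

Lemma U1_zero N : S N 0.
Proof. by exists [::]; rewrite big_nil. Qed.

Lemma U1_add N u v : S N u -> S N v -> S N (u + v).
Proof.
move=> [s [Ps ->]] [s' [Ps' ->]]; exists (s ++ s'); rewrite big_cat; split=> // p.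
by rewrite mem_cat => /orP [/Ps | /Ps'].
Qed.

Lemma U1_opp N u : S N u -> S N (- u).
Proof.
move=> [s [Ps ->]]; exists [seq (- p.1, p.2) | p <- s]; split.
  by move=> p /mapP [q /Ps Pq ->]; apply: (inPhiRN hi).
by rewrite big_map -sumrN; apply: eq_bigr => p _; rewrite (alg_morphN h1) mulNr.
Qed.

Lemma U1_sum N (I : eqType) (r : seq I) (F : I -> T) :
  (forall i, i \in r -> S N (F i)) -> S N (\sum_(i <- r) F i).
Proof.
by move=> SF; rewrite big_seq; apply: big_ind => //; [apply: U1_zero | apply: U1_add].
Qed.

Lemma U1_mul N M u v : S N u -> S M v -> S (N + M) (u * v).
Proof.
move=> [s [Ps ->]] [s' [Ps' ->]]; rewrite big_distrl; apply: U1_sum => p ps /=.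
rewrite big_distrr; apply: U1_sum => p' ps' /=.
rewrite mulrACA -(alg_morphM h1) -(alg_morphM h2); apply: U1_pure.
by apply: (inPhiRM hi fu); [apply: Ps | apply: Ps'].
Qed.

Hypotheses (loc : forall k : K, exists (r : R) (n : nat), k = iota r / iota phi ^+ n)
  (span : forall t, tspan i1 i2 (fun _ _ => True) t).

Lemma U1_exhaustive t : exists N, S N t.
Proof.
have [s [_ ->]] := span t.
elim: s => [|p s [N IH]]; first by exists 0; rewrite big_nil; apply: U1_zero.
have [M Mp] := inPhiR_exhaustive loc p.1.
exists (Num.min N M); rewrite big_cons; apply: U1_add.
- by apply: U1_pure; apply: (inPhiR_mono hi fu) Mp; lia.
- by apply: tspan_weaken IH => a b; apply: (inPhiR_mono hi fu); lia.
Qed.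

Lemma U1_filtration : filtration S.
Proof.
split.
- exact: U1_zero.
- by move=> N u v Su Sv; apply: U1_add => //; apply: U1_opp.
- by move=> M N u le; apply: tspan_weaken => a b; apply: (inPhiR_mono hi fu).
- exact: U1_mul.
- by rewrite -(alg_morph1 h1) -[i1 1]mulr1 -(alg_morph1 h2); apply: U1_pure; exact: inPhiR1.
- exact: U1_exhaustive.
Qed.

(* (f (x) 1 - 1 (x) f) * (-(1 (x) f^-1)) = 1 - f (x) f^-1, and f (x) f^-1 lies
   in phi R (x) K. *)
Lemma U1_diagonal_invertible : invertible_in_completion S (i1 f - i2 f).
Proof.
apply: (invertible_of_factor U1_filtration
  (c := i1 1 * i2 (- f^-1)) (b := 1 - i1 f * i2 f^-1) (M := 0)).
- rewrite (alg_morph1 h1) mul1r (alg_morphN h2) mulrN mulrBl -(alg_morphM h2).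
  by rewrite divrr // (alg_morph1 h2) opprB.
- by apply: U1_pure; exact: inPhiR1.
- by apply: (geometric_invertible U1_filtration); apply: U1_pure; exact: inPhiR_phi.
Qed.
End FirstCompletion.

(* The global coordinate property: f (x) 1 - 1 (x) f lies in the kernel of the
   multiplication map, hence is approximated in hat(K (x) K) by multiples of
   z (x) 1 - 1 (x) z. *)
Lemma diagonal_phi_approx (A : comNzRingType) (R : comAlgType A) (phi : R)
    (K : comUnitAlgType A) (iota : R -> K) (T : comAlgType A) (i1 i2 : K -> T) (z : K) :
  is_alg_morph iota -> is_tensor_product i1 i2 -> global_coordinate phi iota i1 i2 z ->
  exists w, cauchy (U12 phi iota i1 i2) w
    /\ tendsto0 (U12 phi iota i1 i2) (fun n => (i1 (iota phi) - i2 (iota phi)) - (i1 z - i2 z) * w n).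
Proof.
move=> hi tp gc; have [h1 [h2 _]] := tp.
have [mu [mu_lin mu_pure]] := multiplication_map tp.
have [_ kerJ] := gc mu mu_lin mu_pure.
have muB u v : mu (u - v) = mu u - mu v.
  by have := mu_lin (-1) v u; rewrite !scaleN1r addrC => ->; rewrite addrC.
apply/kerJ.
- by move=> NM; exists 0%N => m n _ _; rewrite subrr; exists [::]; rewrite big_nil.
- move=> N; exists 0%N => n _.
  have mu_i1 k : mu (i1 k) = k by rewrite -[i1 k]mulr1 -(alg_morph1 h2) mu_pure mulr1.
  have mu_i2 k : mu (i2 k) = k by rewrite -[i2 k]mul1r -(alg_morph1 h1) mu_pure mul1r.
  by rewrite muB mu_i1 mu_i2 subrr; exact: inPhiR0.
Qed.

Theorem lemma2 (A : comAlgType CC) (R : comAlgType A) (phi : R)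
    (K : comUnitAlgType A) (iota : R -> K) (T : comAlgType A) (i1 i2 : K -> T)
    (z : K) :
  noetherian A ->
  phi_adic_ring phi ->
  is_localization iota phi ->
  is_tensor_product i1 i2 ->
  global_coordinate phi iota i1 i2 z ->
  invertible_in_completion (U1 phi iota i1 i2) (i1 z - i2 z)
  /\ invertible_in_completion (U2 phi iota i1 i2) (i1 z - i2 z).
Proof.
move=> _ _ [hi [_ [fu loc]]] tp gc; have [h1 [h2 _]] := tp.
have span := tensor_spanned tp.
have span_flip t : tspan i2 i1 (fun _ _ => True) t by apply: tspan_flip.
have [w [wC wT]] := diagonal_phi_approx hi tp gc.
split.
- apply: (invertible_of_approx (U1_filtration h1 h2 hi fu loc span)).
  + exact: cauchy_coarser (U12_finer_U1 _ _ _ _) wC.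
  + exact: tendsto0_coarser (U12_finer_U1 _ _ _ _) wT.
  + exact: U1_diagonal_invertible.
- have wC2 := cauchy_coarser (U12_finer_U2 _ _ _ _) wC.
  have wT2 := tendsto0_coarser (U12_finer_U2 _ _ _ _) wT.
  rewrite U2_flip in wC2 wT2 *.
  apply: (invertible_of_approx (U1_filtration h2 h1 hi fu loc span_flip) wC2 wT2).
  rewrite -opprB; apply: (invertibleN (U1_filtration h2 h1 hi fu loc span_flip)).
  exact: U1_diagonal_invertible.
Qed.
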